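(* For every $\mathcal{V}$-poset $P$, \[\mathcal{P}(P;x,y)=L(P;x,y):=\sum_{A\in\mathcal{A}(P)}x^{b(A)}y^{s(A)}.\]
   Context: All posets are finite. A $\mathcal{V}$-poset is a poset generated from the empty poset by repeatedly applying: disjoint union of $\mathcal{V}$-posets, adding a new greatest element, adding a new least element. The polynomial $\mathcal{P}$ is defined on $\mathcal{V}$-posets by: $\mathcal{P}(\emptyset;x,y)=1$; $\mathcal{P}(\bullet;x,y)=x$ for the one-element poset; $\mathcal{P}(\bigcup_iP_i;x,y)=\prod_i\mathcal{P}(P_i;x,y)$ for a disjoint union; and $\mathcal{P}(P\cup\{g\};x,y)=\mathcal{P}(P\cup\{\ell\};x,y)=\mathcal{P}(P;x,y)+y^{|P|}$ where $g$ (resp. $\ell$) is a new greatest (resp. least) element. An element $x$ is basic if: (B.1) there are no two incomparable elements $u,v$ with $x>u$ and $x>v$; (B.2) there are no two incomparable elements $u,v$ with $x<u$ and $x<v$; (B.3) there is no element $u$ with $u<x$ such that for all $w\neq u,x$ one has ($u\ge w\iff x\ge w$) and ($u\le w\iff x\le w$). An element is associated to a set $B$ of basic elements if it is comparable to every element of $B$ and incomparable to every other basic element. A non-basic element $u$ is upper if $u>b$ for some basic $b$, and lower if $u<b$ for some basic $b$. For $a\in P$: if $a$ is basic, $P_a=\emptyset$; otherwise let $B$ be the set of basic elements to which $a$ is associated; if $a$ is lower, $P_a=\{b\in P: a<b,\ \text{there is no } c \text{ with } c<b \text{ and } c \text{ incomparable to } a\}$; if $a$ is upper, $P_a=\{b\in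 P: a>b,\ \text{there is no } c \text{ with } c>b \text{ and } c \text{ incomparable to } a\}\setminus\{\ell\in P: \ell \text{ is a lower element associated to } B\}$. $\mathcal{A}(P)$ is the set of maximal antichains of $P$ (antichain: pairwise incomparable elements; maximal: not properly contained in another antichain). For $A\in\mathcal{A}(P)$, $b(A)$ is the number of basic elements in $A$ and $s(A)=\sum_{a\in A}|P_a|$. *)

From HB Require Import structures.
From mathcomp Require Import all_boot all_algebra.
Set Implicit Arguments. Unset Strict Implicit. Unset Printing Implicit Defensive.
Import GRing.Theory.
Local Open Scope ring_scope.

Inductive vposet : Type :=
| VEmpty : vposet
| VUnion : vposet -> vposet -> vposet
| VTop   : vposet -> vposet
| VBot   : vposet -> vposet.

Fixpoint vcarrier (t : vposet) : finType :=
  match t with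
  | VEmpty => void
  | VUnion a b => (vcarrier a + vcarrier b)%type
  | VTop a => option (vcarrier a)
  | VBot a => option (vcarrier a)
  end.

(* Order relation (<=) of the concrete poset; None is the new element. *)
Fixpoint vle (t : vposet) : rel (vcarrier t) :=
  match t return rel (vcarrier t) with
  | VEmpty => fun _ _ => true
  | VUnion a b => fun u v =>
      match u, v with
      | inl u', inl v' => vle u' v'
      | inr u', inr v' => vle u' v'
      | _, _ => false
      end
  | VTop a => fun u v =>
      match u, v with
      | _, None => true
      | None, Some _ => false
      | Some u', Some v' => vle u' v'
      end
  | VBot a => fun u v =>
      match u, v with
      | None, _ => true
      | Some _, None => false
      | Some u', Some v' => vle u' v'
      end
  end.

(* The polynomial P(P;x,y), evaluated at x y in a commutative ring.
   Adding a greatest/least element to the empty poset gives the one-element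
   poset, for which P = x. *)
Fixpoint Ppoly (R : comNzRingType) (x y : R) (t : vposet) : R :=
  match t with
  | VEmpty => 1
  | VUnion a b => Ppoly x y a * Ppoly x y b
  | VTop a | VBot a =>
      if #|{: vcarrier a}| == 0%N then x
      else Ppoly x y a + y ^+ #|{: vcarrier a}|
  end.

Section PosetNotions.
Variables (T : finType) (le : rel T).

Definition plt (u v : T) : bool := (u != v) && le u v.
Definition pcomp (u v : T) : bool := le u v || le v u.
Definition pincomp (u v : T) : bool := ~~ pcomp u v.

Definition basic (a : T) : bool :=
  [&& ~~ [exists u, exists v, [&& pincomp u v, plt u a & plt v a]],
      ~~ [exists u, exists v, [&& pincomp u v, plt a u & plt a v]] &
      ~~ [exists u, plt u a &&
            [forall w, ((w != u) && (w != a)) ==>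
               ((le w u == le w a) && (le u w == le a w))]]].

Definition assoc_set (a : T) : {set T} := [set b | basic b & pcomp a b].

Definition upper (a : T) : bool := ~~ basic a && [exists b, basic b && plt b a].
Definition lower (a : T) : bool := ~~ basic a && [exists b, basic b && plt a b].

Definition Pset (a : T) : {set T} :=
  if basic a then set0
  else if lower a then
    [set b | plt a b & ~~ [exists c, plt c b && pincomp c a]]
  else if upper a then
    [set b | plt b a & ~~ [exists c, plt b c && pincomp c a]]
      :\: [set l | lower l & assoc_set l == assoc_set a]
  else set0.

Definition antichain (A : {set T}) : bool :=
  [forall u in A, forall v in A, (u != v) ==> pincomp u v].

Definition max_antichain (A : {set T}) : bool :=
  antichain A && [forall B : {set T}, antichain B ==> ~~ (A \proper B)].

Definition bA (A : {set T}) : nat := #|[set a in A | basic a]|.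
Definition sA (A : {set T}) : nat := (\sum_(a in A) #|Pset a|)%N.

Definition Lpoly (R : comNzRingType) (x y : R) : R :=
  \sum_(A : {set T} | max_antichain A) x ^+ bA A * y ^+ sA A.

End PosetNotions.

From Pilot Require Import Defs.
From mathcomp Require Import all_boot all_algebra zify.
(* So that [pcomp] is the comparability relation of Defs, not ssrfun's partial composition. *)
Import Defs.
Set Implicit Arguments. Unset Strict Implicit. Unset Printing Implicit Defensive.
Import GRing.Theory.

(* Both sides are multiplicative over disjoint unions: a maximal antichain of a
   disjoint union is a union of maximal antichains of the parts, and basic
   elements and the sets [Pset] are computed inside each part.  Adding a least
   element l to a nonempty P that is not a chain changes no old weight and adds
   the antichain {l} of weight y^|P|.  Adding a greatest element g adds {g}, of
   weight y^(|P|-k), and raises by one the y-exponent of the k singleton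
   antichains {c} with c in the spine (the lower elements comparable to
   everything); the spine is a down-closed chain, so these exponents are
   |P|-1, ..., |P|-k and the changes telescope to y^|P| - y^(|P|-k), which
   together with {g} contribute y^|P|.  Chains are computed directly.  The two
   facts about V-posets used along the way are that a nonempty one has a basic
   element, and that in it a lower element comparable to every basic element
   is comparable to everything. *)

Lemma exists_option (T : finType) (P : pred (option T)) :
  [exists u, P u] = P None || [exists a, P (Some a)].
Proof.
apply/existsP/orP => [[[a|] Pu]|[PN|/existsP[a Pa]]]; last 2 first.
- by exists None.
- by exists (Some a).
- by right; apply/existsP; exists a.
- by left.
Qed.

Lemma big_option (R : Type) (idx : R) (op : Monoid.com_law idx) (T : finType)
    (F : option T -> R) :
  \big[op/idx]_(u : option T) F u = op (F None) (\big[op/idx]_(a : T) F (Some a)).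
Proof.
rewrite (bigD1 None) //=; congr (op _ _).
rewrite -(big_imset _ (in2W (@Some_inj _))) /=.
apply: eq_bigl => -[a|] /=.
- by rewrite (mem_imset _ _ (@Some_inj _)).
- by apply/esym/imsetP => -[].
Qed.

Lemma card_sum_set (T1 T2 : finType) (A : {set T1 + T2}) :
  #|A| = (#|[set a | inl a \in A]| + #|[set b | inr b \in A]|)%N.
Proof.
rewrite -!sum1_card big_mkcond /= big_sumType /=.
by congr (_ + _)%N; rewrite [RHS]big_mkcond; apply: eq_bigr => a _; rewrite inE.
Qed.

Section Relation.
Variables (T : finType) (le : rel T).

Definition comparable_all (a : T) : bool := [forall w, pcomp le a w].
Definition chain : bool := [forall u, comparable_all u].

Definition twin_below (u a : T) : Prop :=
  plt le u a /\ forall w, w != u -> w != a -> le w u = le w a /\ le u w = le a w.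

Lemma pcompC u v : pcomp le u v = pcomp le v u.
Proof. by rewrite /pcomp orbC. Qed.

Lemma plt_pcomp u v : plt le u v -> pcomp le u v.
Proof. by case/andP=> _ luv; rewrite /pcomp luv. Qed.

Lemma comparable_allP a : reflect (forall w, pcomp le a w) (comparable_all a).
Proof. exact: forallP. Qed.

Lemma chainP : reflect (forall u v, pcomp le u v) chain.
Proof.
apply: (iffP forallP) => [ch u v|ch u]; first exact/comparable_allP.
exact/comparable_allP.
Qed.

Lemma chain_comparable_all : chain -> forall a, comparable_all a.
Proof. by move/forallP. Qed.

Lemma basicP a :
  reflect [/\ forall u v, plt le u a -> plt le v a -> pcomp le u v,
              forall u v, plt le a u -> plt le a v -> pcomp le u v &
              forall u, ~ twin_below u a]
          (basic le a).
Proof.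
apply: (iffP and3P) => [[/existsPn B1 /existsPn B2 /existsPn B3]|[B1 B2 B3]]; split.
- move=> u v ua va; apply/negPn.
  by move: (B1 u) => /existsPn /(_ v); rewrite ua va !andbT.
- move=> u v au av; apply/negPn.
  by move: (B2 u) => /existsPn /(_ v); rewrite au av !andbT.
- move=> u [ua twin]; move: (B3 u); rewrite ua /= => /forallPn[w].
  rewrite negb_imply => /andP[/andP[wu wa]]; have [-> ->] := twin w wu wa.
  by rewrite !eqxx.
- apply/existsPn => u; apply/existsPn => v.
  by apply/and3P => -[/negP uv ua va]; apply/uv/B1.
- apply/existsPn => u; apply/existsPn => v.
  by apply/and3P => -[/negP uv au av]; apply/uv/B2.
- apply/existsPn => u; apply/andP => -[ua /forallP twin]; apply: (B3 u).
  split=> // w wu wa; move/implyP: (twin w); rewrite wu wa => /(_ isT).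
  by case/andP=> /eqP-> /eqP->.
Qed.

Lemma antichainP (A : {set T}) :
  reflect {in A &, forall u v, u != v -> pincomp le u v} (antichain le A).
Proof.
apply: (iffP forall_inP) => [ac u v uA vA|ac u uA].
  by move/forall_inP/(_ v vA)/implyP: (ac u uA).
by apply/forall_inP => v vA; apply/implyP/ac.
Qed.

Lemma max_antichainP (A : {set T}) :
  reflect ({in A &, forall u v, u != v -> pincomp le u v} /\
           forall z, z \notin A -> exists2 a, a \in A & pcomp le z a)
          (max_antichain le A).
Proof.
apply: (iffP andP) => [[/antichainP acA /forallP maxA]|[acA domA]].
  split=> // z zA; apply/exists_inP; apply: contraT => /exists_inPn incomp.
  have acB : antichain le (z |: A).
    apply/antichainP => u v; rewrite !inE.
    case/predU1P=> [->|uA] /predU1P[->|vA]; rewrite ?eqxx // => uv.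
    - exact: incomp.
    - by rewrite /pincomp pcompC; apply: incomp.
    - exact: acA.
  case/negP: (implyP (maxA (z |: A)) acB).
  by apply/properP; split; [apply: subsetUr | exists z; rewrite ?setU11].
split; first exact/antichainP.
apply/forallP => B; apply/implyP => /antichainP acB.
apply/negP => /properP[/subsetP sAB [z zB zA]].
have [a aA za] := domA z zA.
have za' : z != a by apply: contraNneq zA => ->.
by move: (acB z a zB (sAB a aA) za'); rewrite /pincomp za.
Qed.

Lemma max_antichain_comparable_all c (A : {set T}) :
  comparable_all c -> (max_antichain le A && (c \in A)) = (A == [set c]).
Proof.
move=> /comparable_allP cc; apply/andP/eqP => [[/max_antichainP[acA _] cA]|->].
  apply/setP => u; rewrite inE; apply/idP/eqP => [uA|->//].
  by apply: contraTeq (cc u) => uc; rewrite pcompC; apply: acA.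
rewrite set11; split=> //; apply/max_antichainP; split.
  by move=> u v /set1P-> /set1P->; rewrite eqxx.
by move=> z _; exists c; rewrite ?set11 // pcompC.
Qed.

Lemma Pset_plt a b : b \in Pset le a -> plt le a b || plt le b a.
Proof.
rewrite /Pset; case: ifP => [_|_]; first by rewrite inE.
case: ifP => _; first by rewrite inE => /andP[->].
by case: ifP => _; rewrite !inE // => /and3P[_ -> _]; rewrite orbT.
Qed.

Lemma assoc_set_all b :
  (assoc_set le b == [set c | basic le c]) = [forall c, basic le c ==> pcomp le b c].
Proof.
apply/eqP/forallP => [E c|bc].
  by apply/implyP => cb; move: (cb); rewrite -inE -E inE => /andP[].
by apply/setP => c; rewrite !inE; case: (basic le c) (implyP (bc c)) => // ->.
Qed.

Lemma subsingleton_basic a : (#|T| <= 1)%N -> basic le a.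
Proof.
move/fintype_le1P => allEq; apply/basicP; split=> [u v|u v|u [+ _]].
- by rewrite /plt (allEq a u) eqxx.
- by rewrite /plt (allEq a u) eqxx.
- by rewrite /plt (allEq a u) eqxx.
Qed.

Lemma subsingleton_chain : reflexive le -> (#|T| <= 1)%N -> chain.
Proof.
by move=> le_refl /fintype_le1P allEq; apply/chainP => u v; rewrite (allEq v u) /pcomp le_refl.
Qed.

Lemma bA_set1 a : bA le [set a] = basic le a.
Proof.
rewrite /bA; case: (boolP (basic le a)) => ba /=.
  by rewrite -(cards1 a); apply: eq_card => u; rewrite !inE; case: eqVneq => // ->.
apply/eqP; rewrite cards_eq0; apply/eqP/setP => u; rewrite !inE.
by case: eqVneq => // ->; rewrite (negbTE ba).
Qed.

Lemma sA_set1 a : sA le [set a] = #|Pset le a|.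
Proof. exact: big_set1. Qed.

Lemma Lpoly_empty (R : comNzRingType) (x y : R) : #|T| = 0%N -> Lpoly le x y = 1%R.
Proof.
move=> T0; have noT (u : T) : False by have := card0_eq T0 u; rewrite !inE.
have setT0 (A : {set T}) : A = set0 by apply/setP => u; case: (noT u).
rewrite /Lpoly (big_pred1 set0) => [|A].
  by rewrite /bA /sA big_set0 (setT0 [set _ in _ | _]) cards0 mulr1.
rewrite /= (setT0 A) eqxx; apply/max_antichainP; split=> [u|u]; by case: (noT u).
Qed.

End Relation.

Section Order.
Variables (T : finType) (le : rel T).
Hypothesis le_refl : reflexive le.
Hypothesis le_anti : antisymmetric le.
Hypothesis le_trans : transitive le.

Definition down (a : T) : {set T} := [set u | le u a].

Lemma plt_le u v : plt le u v -> le u v.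
Proof. by case/andP. Qed.

Lemma plt_le_nge u v : plt le u v -> ~~ le v u.
Proof. by case/andP=> uv luv; apply: contra uv => lvu; rewrite (@le_anti u v) ?luv. Qed.

Lemma le_plt_trans u v w : le u v -> plt le v w -> plt le u w.
Proof.
move=> luv /andP[vw lvw]; rewrite /plt (le_trans luv lvw) andbT.
by apply: contraNneq vw => uw; apply/eqP/le_anti; rewrite lvw -uw luv.
Qed.

Lemma plt_le_trans u v w : plt le u v -> le v w -> plt le u w.
Proof.
move=> /andP[uv luv] lvw; rewrite /plt (le_trans luv lvw) andbT.
by apply: contraNneq uv => uw; apply/eqP/le_anti; rewrite luv uw lvw.
Qed.

Lemma card_down_plt u v : plt le u v -> #|down u| < #|down v|.
Proof.
move=> uv; apply: proper_card; apply/properP; split.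
  by apply/subsetP => w; rewrite !inE => /le_trans; apply; apply: plt_le.
by exists v; rewrite !inE ?le_refl ?plt_le_nge.
Qed.

Lemma exists_greatest (P : pred T) u :
  P u -> (forall v w, P v -> P w -> pcomp le v w) ->
  exists2 m, P m & forall w, P w -> le w m.
Proof.
move=> Pu Pch; case: (arg_maxnP (fun v => #|down v|) Pu) => m Pm mmax.
exists m => // w Pw; have [->|wm] := eqVneq w m; first exact: le_refl.
have /orP[//|lmw] := Pch w m Pw Pm; have mw : plt le m w by rewrite /plt eq_sym wm.
by move: (mmax w Pw); rewrite /= leqNgt (card_down_plt mw).
Qed.

Lemma exists_least (P : pred T) u :
  P u -> (forall v w, P v -> P w -> pcomp le v w) ->
  exists2 m, P m & forall w, P w -> le m w.
Proof.
move=> Pu Pch; case: (arg_minnP (fun v => #|down v|) Pu) => m Pm mmin.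
exists m => // w Pw; have [->|wm] := eqVneq w m; first exact: le_refl.
have /orP[//|lwm] := Pch m w Pm Pw; have wm' : plt le w m by rewrite /plt wm.
by move: (mmin w Pw); rewrite /= leqNgt (card_down_plt wm').
Qed.

(* By (B.1) the elements below [a] form a chain, whose greatest element is a twin
   of [a]. *)
Lemma comparable_all_not_basic a u :
  comparable_all le a -> plt le u a -> ~~ basic le a.
Proof.
move=> /comparable_allP ca ua; apply/negP => /basicP[B1 _ B3].
have [v va vmax] := @exists_greatest (fun w => plt le w a) u ua B1.
apply: (B3 v); split=> // w wv wa.
have [law|lwa] := orP (ca w).
  have nwv : ~~ le w v := plt_le_nge (plt_le_trans va law).
  have nwa : ~~ le w a by apply: contraNN wa => lwa; apply/eqP/le_anti; rewrite lwa law.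
  by rewrite law (le_trans (plt_le va) law) (negbTE nwv) (negbTE nwa).
have wa' : plt le w a by rewrite /plt wa.
have nvw : ~~ le v w by apply: contraNN wv => lvw; apply/eqP/le_anti; rewrite vmax.
by rewrite vmax // lwa (negbTE nvw) (negbTE (plt_le_nge wa')).
Qed.

Lemma basic_minimum_chain m : basic le m -> (forall w, le m w) -> chain le.
Proof.
move=> /basicP[_ B2 _] mmin; apply/chainP => u v.
have [->|um] := eqVneq u m; first by rewrite /pcomp mmin.
have [->|vm] := eqVneq v m; first by rewrite /pcomp mmin orbT.
by apply: B2; rewrite /plt mmin andbT eq_sym.
Qed.

Lemma basic_comparable_all_chain a :
  basic le a -> comparable_all le a -> chain le.
Proof.
move=> ba ca; apply: (basic_minimum_chain ba) => w.
have /orP[//|lwa] := comparable_allP _ _ ca w.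
have [->|wa] := eqVneq w a; first exact: le_refl.
have wa' : plt le w a by rewrite /plt wa.
by case/negP: (comparable_all_not_basic ca wa').
Qed.

Lemma chain_basicE a : chain le -> basic le a = (down a == [set a]).
Proof.
move=> /chainP ch; apply/idP/eqP => [ba|da].
  apply/setP => u; rewrite !inE; apply/idP/eqP => [ua|->]; last exact: le_refl.
  apply/eqP; apply: contraTT ba => ua'.
  by apply: (@comparable_all_not_basic a u); [apply/comparable_allP | rewrite /plt ua' ua].
have nobelow u : ~~ plt le u a.
  apply/andP=> -[ua lua]; have : u \in down a by rewrite inE.
  by rewrite da inE (negbTE ua).
apply/basicP; split=> [u v ua|u v _ _|u [ua _]].
- by rewrite (negbTE (nobelow u)) in ua.
- exact: ch.
- by rewrite (negbTE (nobelow u)) in ua.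
Qed.

Lemma chain_not_lower a : chain le -> ~~ lower le a.
Proof.
move=> ch; apply/andP => -[_ /existsP[b /andP[bb ab]]].
by case/negP: (comparable_all_not_basic (chain_comparable_all ch b) ab).
Qed.

Lemma chain_minimum_basic m : chain le -> (forall w, le m w) -> basic le m.
Proof.
move=> ch mmin; rewrite chain_basicE //; apply/eqP/setP => u; rewrite !inE.
by apply/idP/eqP => [lum|->]; [apply/le_anti; rewrite lum mmin | apply: le_refl].
Qed.

Lemma chain_Pset a : chain le -> ~~ basic le a -> Pset le a = down a :\ a.
Proof.
move=> ch na.
have [m _ mbot] := @exists_least predT a isT (fun v w _ _ => chainP _ ch v w).
have bm := chain_minimum_basic ch (fun w => mbot w isT).
have ua : upper le a.
  rewrite /upper na; apply/existsP; exists m; rewrite bm /plt mbot // andbT.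
  by apply: contraNneq na => <-.
rewrite /Pset (negbTE na) (negbTE (chain_not_lower a ch)) ua.
apply/setP => b; rewrite !inE (negbTE (chain_not_lower b ch)).
have -> : [exists c, plt le b c && pincomp le c a] = false.
  by apply/existsPn => c; rewrite /pincomp (chainP _ ch) andbF.
by rewrite andbT.
Qed.

Lemma chain_basic_card_down a : chain le -> basic le a = (#|down a| == 1%N).
Proof.
move=> ch; rewrite chain_basicE // eq_sym eqEcard sub1set inE le_refl cards1 /=.
have : (0 < #|down a|)%N by apply/card_gt0P; exists a; rewrite inE le_refl.
by rewrite eqn_leq => ->; rewrite andbT.
Qed.

Lemma chain_card_Pset a : chain le -> ~~ basic le a -> #|Pset le a| = #|down a|.-1.
Proof. by move=> ch na; rewrite chain_Pset // [in RHS](cardsD1 a) inE le_refl. Qed.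

Lemma chain_max_antichainE (A : {set T}) : chain le -> (0 < #|T|)%N ->
  max_antichain le A = (A \in [set [set a] | a in T]).
Proof.
move=> ch T_gt0; apply/idP/imsetP => [maxA|[a _ ->]]; last first.
  have := max_antichain_comparable_all [set a] (chain_comparable_all ch a).
  by rewrite eqxx set11 andbT.
have [a aA] : exists a, a \in A.
  have [t _] : exists t, t \in T by apply/card_gt0P.
  have [tA|tA] := boolP (t \in A); first by exists t.
  by move/max_antichainP: maxA => [_ /(_ t tA)[a aA _]]; exists a.
exists a => //; apply/eqP.
by rewrite -(max_antichain_comparable_all _ (chain_comparable_all ch a)) maxA aA.
Qed.

Local Open Scope ring_scope.

Lemma sum_card_down_chain (R : nmodType) (F : nat -> R) (S : {set T}) :
  {in S &, forall u v, pcomp le u v} -> {in S, forall v u, le u v -> u \in S} ->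
  \sum_(c in S) F #|down c| = \sum_(i < #|S|) F i.+1.
Proof.
move Hn: #|S| => n; elim: n S Hn => [|n IH] S Hn Sch Sdown.
  by rewrite (cards0_eq Hn) big_set0 big_ord0.
have [t tS] : {t | t \in S} by apply/sigW/card_gt0P; rewrite Hn.
have [c cS cmax] := @exists_greatest (fun u => u \in S) t tS Sch.
have dc : down c = S.
  by apply/setP => u; rewrite inE; apply/idP/idP => [|uS]; [exact: Sdown | exact: cmax].
have HS' : #|S :\ c| = n by move: Hn; rewrite (cardsD1 c) cS add1n => -[].
rewrite (bigD1 c) //= dc Hn big_ord_recr /= addrC; congr (_ + _).
rewrite -(IH (S :\ c) HS').
- by apply: eq_bigl => u; rewrite in_setD1 andbC.
- by apply: sub_in2 Sch; apply/subsetP/subD1set.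
- move=> v; rewrite in_setD1 => /andP[vc vS] u luv; rewrite in_setD1 (Sdown v vS u luv) andbT.
  apply: contraNneq vc => uc; have : v \in down c by rewrite dc.
  by rewrite inE -uc => lvu; apply/eqP/le_anti; rewrite lvu luv.
Qed.


Lemma Lpoly_chain (R : comNzRingType) (x y : R) n :
  chain le -> #|T| = n.+1 -> Lpoly le x y = x + \sum_(i < n) y ^+ i.+1.
Proof.
move=> ch HT; rewrite /Lpoly (eq_bigl _ _ (fun A => chain_max_antichainE A ch _)) ?HT //.
rewrite big_imset /=; last by move=> a b _ _; apply: set1_inj.
pose F k := if k == 1%N then x else y ^+ k.-1.
rewrite (eq_bigr (fun a => F #|down a|)) => [|a _]; last first.
  rewrite bA_set1 sA_set1 /F -chain_basic_card_down //.
  have [ba|na] := boolP (basic le a); last by rewrite chain_card_Pset // mul1r.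
  by rewrite /Pset ba cards0 mulr1.
rewrite -big_set /= sum_card_down_chain; first by rewrite cardsT HT big_ord_recl.
- by move=> u v _ _; apply: (chainP _ ch).
- by move=> v _ u _; rewrite inE.
Qed.

Lemma Lpoly_card1 (R : comNzRingType) (x y : R) : #|T| = 1%N -> Lpoly le x y = x.
Proof.
move=> T1; rewrite (Lpoly_chain x y (subsingleton_chain le_refl _) T1) ?T1 //.
by rewrite big_ord0 addr0.
Qed.

(* The spine is a down-closed chain, and its elements are exactly those whose
   [Pset] gains a new greatest element. *)
Definition spine : {set T} := [set c | lower le c && comparable_all le c].

Definition spine_complete : Prop :=
  forall l, lower le l -> [forall c, basic le c ==> pcomp le l c] -> comparable_all le l.

Lemma spine_not_basic c : c \in spine -> ~~ basic le c.
Proof. by rewrite inE => /andP[/andP[]]. Qed.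

Lemma spine_comparable_all c : c \in spine -> comparable_all le c.
Proof. by rewrite inE => /andP[]. Qed.

Lemma spine_down_closed c u : c \in spine -> plt le u c -> u \in spine.
Proof.
rewrite inE => /andP[/andP[_ /existsP[b /andP[bb cb]]] /comparable_allP cc] uc.
have ub : plt le u b := le_plt_trans (plt_le uc) cb.
have cu : comparable_all le u.
  apply/comparable_allP => w; have /orP[lcw|lwc] := cc w.
    by rewrite /pcomp (le_trans (plt_le uc) lcw).
  by case/basicP: bb => B1 _ _; apply: B1 ub (le_plt_trans lwc cb).
rewrite inE cu andbT /lower; apply/andP; split; last by apply/existsP; exists b; rewrite bb.
apply/negP => bu; have ch := basic_comparable_all_chain bu cu.
by case/negP: (comparable_all_not_basic (chain_comparable_all ch b) cb).
Qed.

Lemma Pset_spine c : c \in spine -> Pset le c = ~: down c.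
Proof.
move=> cS; have /comparable_allP cc := spine_comparable_all cS.
move: (cS); rewrite /Pset inE => /andP[lc _]; rewrite (negbTE (spine_not_basic cS)) lc.
apply/setP => b; rewrite !inE.
have -> : [exists d, plt le d b && pincomp le d c] = false.
  by apply/existsPn => d; rewrite /pincomp pcompC cc andbF.
rewrite andbT; apply/idP/idP => [/plt_le_nge //|nbc].
case/orP: (cc b) => [lcb|lbc]; last by rewrite lbc in nbc.
rewrite /plt lcb andbT.
by apply: contraNneq nbc => <-; apply: le_refl.
Qed.

Lemma sum_spine_rank (R : nmodType) (F : nat -> R) :
  \sum_(c in spine) F #|down c| = \sum_(i < #|spine|) F i.+1.
Proof.
apply: sum_card_down_chain => [u v uS _|v vS u luv].
  by apply/(comparable_allP _ _ (spine_comparable_all uS)).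
have [->//|uv] := eqVneq u v.
by apply: (spine_down_closed vS); rewrite /plt uv.
Qed.

Lemma sum_max_antichain_spine (R : nmodType) (F : {set T} -> R) :
  \sum_(A | max_antichain le A) F A =
  \sum_(A | max_antichain le A && [disjoint A & spine]) F A + \sum_(c in spine) F [set c].
Proof.
rewrite (bigID (fun A : {set T} => [disjoint A & spine])) /=; congr (_ + _).
rewrite -(big_imset _ (in2W (@set1_inj _))) /=; apply: eq_bigl => A.
apply/andP/imsetP => [[maxA /pred0Pn[c /andP[cA cS]]]|[c cS ->]].
  exists c => //; apply/eqP.
  by rewrite -(max_antichain_comparable_all _ (spine_comparable_all cS)) maxA; exact: cA.
rewrite disjoints1 cS; split=> //.
by have := max_antichain_comparable_all [set c] (spine_comparable_all cS); rewrite set11 eqxx andbT.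
Qed.

End Order.

(* Transfer of the notions along an order embedding [f] whose outside elements
   see the whole image alike: this covers adding a greatest or a least element
   and each summand of a disjoint union. *)
Section Embedding.
Variables (S T : finType) (leS : rel S) (le : rel T) (f : S -> T).
Hypothesis f_inj : injective f.
Hypothesis le_f : forall a b, le (f a) (f b) = leS a b.
Hypothesis outside_uniform : forall w, w \notin codom f ->
  forall a b, le w (f a) = le w (f b) /\ le (f a) w = le (f b) w.

Lemma plt_f a b : plt le (f a) (f b) = plt leS a b.
Proof. by rewrite /plt (inj_eq f_inj) le_f. Qed.

Lemma pcomp_f a b : pcomp le (f a) (f b) = pcomp leS a b.
Proof. by rewrite /pcomp !le_f. Qed.

Lemma pcomp_outside w a b :
  w \notin codom f -> le w (f b) || le (f b) w -> pcomp le w (f a).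
Proof. by move=> out; have [-> ->] := outside_uniform out b a. Qed.

Lemma exists_codom (P : pred T) :
  (forall w, w \notin codom f -> ~~ P w) -> [exists w, P w] = [exists a, P (f a)].
Proof.
move=> Pout; apply/existsP/existsP => [[w Pw]|[a Pa]]; last by exists (f a).
have /codomP[a wE] : w \in codom f by apply: contraLR Pw => /Pout.
by exists a; rewrite -wE.
Qed.

Lemma twin_below_f u x : twin_below le (f u) (f x) <-> twin_below leS u x.
Proof.
rewrite /twin_below plt_f; split=> -[ux twin]; split=> // w.
  by move=> wu wx; rewrite -!le_f; apply: twin; rewrite (inj_eq f_inj).
have [/codomP[a ->]|out] := boolP (w \in codom f).
  by rewrite !(inj_eq f_inj) !le_f; apply: twin.
by have [-> ->] := outside_uniform out u x.
Qed.

Lemma basic_f_restrict x : basic le (f x) -> basic leS x.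
Proof.
move=> /basicP[B1 B2 B3]; apply/basicP; split.
- by move=> u v ux vx; rewrite -pcomp_f; apply: B1; rewrite plt_f.
- by move=> u v xu xv; rewrite -pcomp_f; apply: B2; rewrite plt_f.
- by move=> u /twin_below_f /B3.
Qed.

Lemma basic_f_extend x : basic leS x ->
  (forall u, u \notin codom f -> plt le u (f x) || plt le (f x) u ->
     comparable_all le u /\ ~ twin_below le u (f x)) ->
  basic le (f x).
Proof.
move=> /basicP[B1 B2 B3] out; apply/basicP; split.
- move=> u v; have [/codomP[a ->]|uout] := boolP (u \in codom f); last first.
    by move=> ux _; move: (out u uout); rewrite ux => /(_ isT)[/comparable_allP -> _].
  have [/codomP[b ->]|vout] := boolP (v \in codom f); last first.
    move=> _ vx; move: (out v vout); rewrite vx => /(_ isT)[/comparable_allP cv _].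
    by rewrite pcompC.
  by rewrite !plt_f pcomp_f; apply: B1.
- move=> u v; have [/codomP[a ->]|uout] := boolP (u \in codom f); last first.
    by move=> xu _; move: (out u uout); rewrite xu orbT => /(_ isT)[/comparable_allP -> _].
  have [/codomP[b ->]|vout] := boolP (v \in codom f); last first.
    move=> _ xv; move: (out v vout); rewrite xv orbT => /(_ isT)[/comparable_allP cv _].
    by rewrite pcompC.
  by rewrite !plt_f pcomp_f; apply: B2.
- move=> u; have [/codomP[a ->]|uout] := boolP (u \in codom f).
    by move/twin_below_f; apply: B3.
  by move=> tw; move: (out u uout); rewrite tw.1 => /(_ isT)[_]; apply.
Qed.

Section Transfer.
Hypothesis basic_f : forall a, basic le (f a) = basic leS a.
Hypothesis basic_outside : forall w a, w \notin codom f -> basic le w -> pincomp le w (f a).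

Lemma lower_f a : lower le (f a) = lower leS a.
Proof.
rewrite /lower basic_f (@exists_codom (fun b => basic le b && plt le (f a) b)).
  by congr (_ && _); apply: eq_existsb => b; rewrite basic_f plt_f.
move=> w out; apply/andP => -[bw /plt_pcomp]; rewrite pcompC.
exact/negP/basic_outside.
Qed.

Lemma upper_f a : upper le (f a) = upper leS a.
Proof.
rewrite /upper basic_f (@exists_codom (fun b => basic le b && plt le b (f a))).
  by congr (_ && _); apply: eq_existsb => b; rewrite basic_f plt_f.
move=> w out; apply/andP => -[bw /plt_pcomp].
exact/negP/basic_outside.
Qed.

Lemma assoc_set_f a : assoc_set le (f a) = f @: assoc_set leS a.
Proof.
apply/setP => w; have [/codomP[b ->]|out] := boolP (w \in codom f).
  by rewrite (mem_imset _ _ f_inj) !inE basic_f pcomp_f.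
rewrite inE; apply/andP/imsetP => [[bw]|[b _ wE]]; last by rewrite wE codom_f in out.
by rewrite pcompC; move/negP: (basic_outside a out bw).
Qed.

Lemma preim_Pset_f a : [set b | f b \in Pset le (f a)] = Pset leS a.
Proof.
rewrite /Pset basic_f lower_f upper_f.
case: ifP => _; first by apply/setP => b; rewrite !inE.
case: ifP => _.
  apply/setP => b; rewrite !inE plt_f.
  rewrite (@exists_codom (fun c => plt le c (f b) && pincomp le c (f a))).
    by congr (_ && ~~ _); apply: eq_existsb => c; rewrite plt_f /pincomp pcomp_f.
  move=> w out; rewrite /pincomp; apply/andP => -[/plt_le lwb /negP[]].
  by apply: (pcomp_outside a (b:=b) out); rewrite lwb.
case: ifP => _; last by apply/setP => b; rewrite !inE.
apply/setP => b; rewrite !inE lower_f !assoc_set_f (inj_eq (imset_inj f_inj)) plt_f.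
rewrite (@exists_codom (fun c => plt le (f b) c && pincomp le c (f a))).
  by congr (_ && (_ && ~~ _)); apply: eq_existsb => c; rewrite plt_f /pincomp pcomp_f.
move=> w out; rewrite /pincomp; apply/andP => -[/plt_le lbw /negP[]].
by apply: (pcomp_outside a (b:=b) out); rewrite lbw orbT.
Qed.

End Transfer.
End Embedding.

Section Summand.
Variables (S T : finType) (leS : rel S) (le : rel T) (f : S -> T).
Hypothesis f_inj : injective f.
Hypothesis le_f : forall a b, le (f a) (f b) = leS a b.
Hypothesis outside_incomparable : forall w a, w \notin codom f -> pincomp le w (f a).

Lemma summand_uniform w : w \notin codom f ->
  forall a b, le w (f a) = le w (f b) /\ le (f a) w = le (f b) w.
Proof.
move=> out a b; have := outside_incomparable a out; have := outside_incomparable b out.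
by rewrite /pincomp /pcomp !negb_or => /andP[/negbTE-> /negbTE->] /andP[/negbTE-> /negbTE->].
Qed.

Lemma basic_summand a : basic le (f a) = basic leS a.
Proof.
apply/idP/idP; first exact: (basic_f_restrict f_inj le_f summand_uniform).
move=> ba; apply: (basic_f_extend f_inj le_f summand_uniform ba) => u out /orP[] /plt_pcomp.
  by move: (outside_incomparable a out); rewrite /pincomp => /negbTE->.
by move: (outside_incomparable a out); rewrite /pincomp pcompC => /negbTE->.
Qed.

Lemma lower_summand a : lower le (f a) = lower leS a.
Proof. by apply: (lower_f f_inj le_f basic_summand) => w b out _; apply: outside_incomparable. Qed.

Lemma Pset_summand a : Pset le (f a) = f @: Pset leS a.
Proof.
rewrite -(preim_Pset_f f_inj le_f summand_uniform basic_summand); last first.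
  by move=> w b out _; apply: outside_incomparable.
apply/setP => w; apply/idP/imsetP => [wP|[b]]; last by rewrite inE => ? ->.
have /codomP[b wE] : w \in codom f.
  apply: contraT => out; move: (Pset_plt wP) (outside_incomparable a out).
  by rewrite /pincomp pcompC => /orP[] /plt_pcomp; [|rewrite pcompC] => ->.
by exists b; rewrite // inE -wE.
Qed.

End Summand.

Lemma card_option_set (T : finType) (A : {set option T}) :
  #|A| = ((None \in A) + #|[set a | Some a \in A]|)%N.
Proof.
rewrite -!sum1_card !big_mkcond /= big_option /=.
by congr (_ + _)%N; rewrite [RHS]big_mkcond; apply: eq_bigr => a _; rewrite inE.
Qed.

Lemma Some_in_imset (T : finType) (A : {set T}) a : (Some a \in Some @: A) = (a \in A).
Proof. exact/mem_imset/Some_inj. Qed.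

Lemma None_in_imset (T : finType) (A : {set T}) : (None \in Some @: A) = false.
Proof. by apply/imsetP => -[]. Qed.

Section ComparableExtension.
Variables (T : finType) (le : rel T) (le' : rel (option T)).
Hypothesis le'_Some : forall a b, le' (Some a) (Some b) = le a b.
Hypothesis None_comparable_all : comparable_all le' None.

Lemma max_antichain_Some (A : {set T}) :
  (0 < #|T|)%N -> max_antichain le' (Some @: A) = max_antichain le A.
Proof.
move=> T_gt0.
have pcompS a b : pcomp le' (Some a) (Some b) = pcomp le a b by rewrite /pcomp !le'_Some.
apply/max_antichainP/max_antichainP => -[acA domA]; split.
- move=> u v uA vA uv; rewrite /pincomp -pcompS.
  by apply: acA; rewrite ?Some_in_imset ?(inj_eq Some_inj).
- move=> z zA; move: (domA (Some z)); rewrite Some_in_imset => /(_ zA) [[a|] aA za].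
    by rewrite Some_in_imset in aA; exists a; rewrite // -pcompS.
  by rewrite None_in_imset in aA.
- move=> [u|] [v|]; rewrite ?Some_in_imset ?None_in_imset // => uA vA uv.
  by rewrite /pincomp pcompS; apply: acA; rewrite // -(inj_eq Some_inj).
- move=> [z|] zA.
    rewrite Some_in_imset in zA; have [a aA za] := domA z zA.
    by exists (Some a); rewrite ?Some_in_imset ?pcompS.
  have [t _] : exists t, t \in T by apply/card_gt0P.
  have [a aA] : exists a, a \in A.
    have [tA|tA] := boolP (t \in A); first by exists t.
    by have [a aA _] := domA t tA; exists a.
  by exists (Some a); rewrite ?Some_in_imset //; move/comparable_allP: None_comparable_all.
Qed.

Lemma sum_max_antichain_option (R : nmodType) (F : {set option T} -> R) :
  (0 < #|T|)%N ->
  (\sum_(A | max_antichain le' A) F A =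
   F [set None] + \sum_(A | max_antichain le A) F (Some @: A))%R.
Proof.
move=> T_gt0; rewrite (bigID (fun A : {set option T} => None \in A)) /=; congr (_ + _)%R.
  by rewrite (big_pred1 [set None]) // => A; rewrite max_antichain_comparable_all.
rewrite (reindex_onto (fun A : {set T} => Some @: A) (fun A => [set a | Some a \in A])) /=.
  apply: eq_bigl => A; rewrite max_antichain_Some //.
  have -> : [set a | Some a \in Some @: A] = A.
    by apply/setP => a; rewrite inE Some_in_imset.
  by rewrite None_in_imset eqxx !andbT.
move=> A /andP[_ NA]; apply/setP => -[a|]; last by rewrite None_in_imset (negbTE NA).
by rewrite Some_in_imset inE.
Qed.

Lemma bA_Some (A : {set T}) :
  (forall a, basic le' (Some a) = basic le a) -> bA le' (Some @: A) = bA le A.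
Proof.
move=> basicS; rewrite /bA -[in RHS](card_imset _ (@Some_inj _)).
suff -> : [set u in Some @: A | basic le' u] = Some @: [set a in A | basic le a] by [].
apply/setP => -[a|]; first by rewrite inE !Some_in_imset inE basicS.
by rewrite inE !None_in_imset.
Qed.

Lemma sA_Some (A : {set T}) :
  sA le' (Some @: A) = (\sum_(a in A) #|Pset le' (Some a)|)%N.
Proof. by rewrite /sA big_imset //; apply: in2W; apply: Some_inj. Qed.

End ComparableExtension.

Local Open Scope ring_scope.

Lemma telescope_pow (R : pzSemiRingType) (y : R) n k : (k <= n)%N ->
  y ^+ (n - k) + \sum_(i < k) y ^+ (n - i) = \sum_(i < k) y ^+ (n - i.+1) + y ^+ n.
Proof.
elim: k => [|k IH] lekn; first by rewrite subn0 !big_ord0 add0r addr0.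
rewrite !big_ord_recr /=.
rewrite (addrC _ (y ^+ (n - k))) IH; last exact: ltnW.
by rewrite addrCA addrA.
Qed.

Lemma notin_codom_Some (T : finType) (w : option T) : (w \notin codom Some) = (w == None).
Proof. by case: w => [a|]; rewrite ?codom_f //; apply/negP => /codomP[]. Qed.

Definition add_top (T : finType) (le : rel T) : rel (option T) := fun u v =>
  match u, v with
  | _, None => true
  | None, Some _ => false
  | Some a, Some b => le a b
  end.

Definition add_bot (T : finType) (le : rel T) : rel (option T) := fun u v =>
  match u, v with
  | None, _ => true
  | Some _, None => false
  | Some a, Some b => le a b
  end.

Section AddTop.
Variables (T : finType) (le : rel T).
Local Notation le' := (add_top le).

Lemma add_top_Some a b : le' (Some a) (Some b) = le a b.
Proof. by []. Qed.

Lemma add_top_refl : reflexive le -> reflexive le'.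
Proof. by move=> le_refl [a|] /=. Qed.

Lemma add_top_anti : antisymmetric le -> antisymmetric le'.
Proof. by move=> le_anti [a|] [b|] //= /le_anti->. Qed.

Lemma add_top_trans : transitive le -> transitive le'.
Proof. by move=> le_trans [b|] [a|] [c|] //=; apply: le_trans. Qed.

Lemma add_top_uniform w : w \notin codom Some ->
  forall a b, le' w (Some a) = le' w (Some b) /\ le' (Some a) w = le' (Some b) w.
Proof. by rewrite notin_codom_Some => /eqP->. Qed.

Lemma add_top_None_comparable_all : comparable_all le' None.
Proof. by apply/comparable_allP => -[a|]. Qed.

Lemma comparable_all_add_top_Some a : comparable_all le' (Some a) = comparable_all le a.
Proof. by apply/comparable_allP/comparable_allP => ca w; [apply: (ca (Some w)) | case: w]. Qed.

Lemma basic_add_top_Some x : basic le' (Some x) = basic le x.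
Proof.
apply/idP/idP; first exact: (basic_f_restrict (@Some_inj _) add_top_Some add_top_uniform).
move=> bx; apply: (basic_f_extend (@Some_inj _) add_top_Some add_top_uniform bx).
move=> u; rewrite notin_codom_Some => /eqP-> _.
split; first exact: add_top_None_comparable_all.
by case; rewrite /plt andbF.
Qed.

Hypotheses (le_refl : reflexive le) (le_anti : antisymmetric le) (le_trans : transitive le).
Hypothesis T_gt0 : (0 < #|T|)%N.

(* If [T] is a chain its maximum is a twin of the new top, otherwise two
   incomparable elements lie below it. *)
Lemma add_top_None_not_basic : ~~ basic le' None.
Proof.
apply/negP => /basicP[B1 _ B3].
have [ch|nch] := boolP (chain le); last first.
  case/negP: nch; apply/chainP => u v; rewrite -(pcomp_f add_top_Some).
  by apply: B1.
have [t _] : exists t, t \in T by apply/card_gt0P.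
have [m _ mtop] := exists_greatest le_refl le_anti le_trans (P := predT) (isT : predT t)
  (fun v w _ _ => chainP _ ch v w).
apply: (B3 (Some m)); split=> // -[w|] // wm _; rewrite /= (inj_eq (@Some_inj _)) in wm.
rewrite /= mtop //; split=> //; apply/negbTE; apply: contra wm => lmw.
by apply/eqP/le_anti; rewrite lmw mtop.
Qed.

Lemma add_top_basic_outside w a :
  w \notin codom Some -> basic le' w -> pincomp le' w (Some a).
Proof. by rewrite notin_codom_Some => /eqP-> bN; case/negP: add_top_None_not_basic. Qed.

Lemma lower_add_top_Some a : lower le' (Some a) = lower le a.
Proof. exact: (lower_f (@Some_inj _) add_top_Some basic_add_top_Some add_top_basic_outside). Qed.

Lemma upper_add_top_Some a : upper le' (Some a) = upper le a.
Proof. exact: (upper_f (@Some_inj _) add_top_Some basic_add_top_Some add_top_basic_outside). Qed.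

Lemma None_in_Pset_add_top a : (None \in Pset le' (Some a)) = (a \in spine le).
Proof.
rewrite /Pset basic_add_top_Some lower_add_top_Some upper_add_top_Some [RHS]inE.
case: ifP => [ba|_]; first by rewrite inE /lower ba.
case: ifP => [la|nla]; last by case: ifP; rewrite !inE ?andbF ?nla.
rewrite inE exists_option /= negb_exists /comparable_all; apply: eq_forallb => c.
by rewrite /pincomp negbK (pcomp_f add_top_Some) pcompC.
Qed.

Lemma card_Pset_add_top_Some a :
  #|Pset le' (Some a)| = (#|Pset le a| + (a \in spine le))%N.
Proof.
rewrite card_option_set None_in_Pset_add_top addnC.
by rewrite (preim_Pset_f (@Some_inj _) add_top_Some add_top_uniform basic_add_top_Some
  add_top_basic_outside).
Qed.

Lemma assoc_set_add_top_None : assoc_set le' None = Some @: [set c | basic le c].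
Proof.
apply/setP => -[c|]; rewrite inE ?Some_in_imset ?None_in_imset.
  by rewrite inE basic_add_top_Some /pcomp /= andbT.
by rewrite (negbTE add_top_None_not_basic).
Qed.

Lemma card_Pset_add_top_None :
  (exists b, basic le b) -> spine_complete le ->
  #|Pset le' None| = (#|T| - #|spine le|)%N.
Proof.
move=> [b bb] complete.
have nlN : ~~ lower le' None.
  by rewrite negb_and negbK; apply/orP; right; apply/existsPn => -[c|]; rewrite /plt /= ?andbF.
have uN : upper le' None.
  rewrite /upper add_top_None_not_basic; apply/existsP.
  by exists (Some b); rewrite basic_add_top_Some bb.
rewrite /Pset (negbTE add_top_None_not_basic) (negbTE nlN) uN card_option_set.
rewrite !inE /plt eqxx andbF add0n -(cardsC (spine le)) addKn; apply: eq_card => l.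
rewrite !inE /=.
have -> : [exists c, (Some l != c) && le' (Some l) c && pincomp le' c None] = false.
  apply/existsPn => c; rewrite /pincomp pcompC.
  by move/comparable_allP: add_top_None_comparable_all => ->; rewrite andbF.
rewrite andbT lower_add_top_Some assoc_set_add_top_None.
rewrite (assoc_set_f (@Some_inj _) add_top_Some basic_add_top_Some add_top_basic_outside).
rewrite (inj_eq (imset_inj (@Some_inj _))) assoc_set_all; congr negb.
apply/andP/andP => [[ll lb]|[ll /comparable_allP lc]]; first by split; last exact: complete.
by split=> //; apply/forallP => c; apply/implyP.
Qed.


Lemma Lpoly_add_top (R : comNzRingType) (x y : R) :
  (exists b, basic le b) -> spine_complete le ->
  Lpoly le' x y = Lpoly le x y + y ^+ #|T|.
Proof.
move=> hb complete; have kn : (#|spine le| <= #|T|)%N := max_card _.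
rewrite /Lpoly (sum_max_antichain_option add_top_Some add_top_None_comparable_all _ T_gt0).
rewrite !sum_max_antichain_spine.
rewrite bA_set1 sA_set1 (negbTE add_top_None_not_basic) card_Pset_add_top_None // mul1r.
have -> : \sum_(A | max_antichain le A && [disjoint A & spine le])
            x ^+ bA le' (Some @: A) * y ^+ sA le' (Some @: A) =
          \sum_(A | max_antichain le A && [disjoint A & spine le])
            x ^+ bA le A * y ^+ sA le A.
  apply: eq_bigr => A /andP[_ dA]; rewrite (bA_Some _ basic_add_top_Some) sA_Some.
  congr (_ * _ ^+ _); apply: eq_bigr => a aA.
  by rewrite card_Pset_add_top_Some (disjointFr dA aA) addn0.
have cardP c : c \in spine le -> #|Pset le c| = (#|T| - #|down le c|)%N.
  by move=> cS; rewrite Pset_spine // -(cardsC (down le c)) addKn.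
have -> : \sum_(c in spine le) x ^+ bA le' (Some @: [set c]) * y ^+ sA le' (Some @: [set c]) =
          \sum_(i < #|spine le|) y ^+ (#|T| - i).
  transitivity (\sum_(i < #|spine le|) y ^+ (#|T| - i.+1).+1); last first.
    by apply: eq_bigr => i _; congr (_ ^+ _); have := ltn_ord i; lia.
  rewrite -(sum_spine_rank le_refl le_anti le_trans (fun d => y ^+ (#|T| - d).+1)).
  apply: eq_bigr => c cS; rewrite imset_set1 bA_set1 sA_set1 basic_add_top_Some.
  by rewrite (negbTE (spine_not_basic cS)) mul1r card_Pset_add_top_Some cS cardP // addn1.
rewrite (eq_bigr (fun c => y ^+ (#|T| - #|down le c|))); last first.
  by move=> c cS; rewrite bA_set1 sA_set1 (negbTE (spine_not_basic cS)) mul1r cardP.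
rewrite (sum_spine_rank le_refl le_anti le_trans (fun d => y ^+ (#|T| - d))).
by rewrite addrCA telescope_pow // addrA.
Qed.
End AddTop.

Section AddBot.
Variables (T : finType) (le : rel T).
Local Notation le' := (add_bot le).

Lemma add_bot_Some a b : le' (Some a) (Some b) = le a b.
Proof. by []. Qed.

Lemma add_bot_refl : reflexive le -> reflexive le'.
Proof. by move=> le_refl [a|] /=. Qed.

Lemma add_bot_anti : antisymmetric le -> antisymmetric le'.
Proof. by move=> le_anti [a|] [b|] //= /le_anti->. Qed.

Lemma add_bot_trans : transitive le -> transitive le'.
Proof. by move=> le_trans [b|] [a|] [c|] //=; apply: le_trans. Qed.

Lemma add_bot_uniform w : w \notin codom Some ->
  forall a b, le' w (Some a) = le' w (Some b) /\ le' (Some a) w = le' (Some b) w.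
Proof. by rewrite notin_codom_Some => /eqP->. Qed.

Lemma add_bot_None_comparable_all : comparable_all le' None.
Proof. by apply/comparable_allP => -[a|]. Qed.

Lemma comparable_all_add_bot_Some a : comparable_all le' (Some a) = comparable_all le a.
Proof. by apply/comparable_allP/comparable_allP => ca w; [apply: (ca (Some w)) | case: w]. Qed.

Lemma add_bot_chain : chain le -> chain le'.
Proof.
by move/chainP => ch; apply/chainP => -[a|] [b|] //; apply: ch.
Qed.

Hypotheses (le_refl : reflexive le) (le_anti : antisymmetric le) (le_trans : transitive le).
Hypothesis has_basic : exists b, basic le b.

Section NotChain.
Hypothesis nch : ~~ chain le.

(* A basic element below which the new bottom is a twin would be the minimum of
   [T], which forces [T] to be a chain. *)
Lemma basic_add_bot_Some x : basic le' (Some x) = basic le x.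
Proof.
apply/idP/idP; first exact: (basic_f_restrict (@Some_inj _) add_bot_Some add_bot_uniform).
move=> bx; apply: (basic_f_extend (@Some_inj _) add_bot_Some add_bot_uniform bx).
move=> u; rewrite notin_codom_Some => /eqP-> _.
split=> [|[_ twin]]; first exact: add_bot_None_comparable_all.
case/negP: nch; apply: (basic_minimum_chain bx) => w.
have [->|wx] := eqVneq w x; first exact: le_refl.
have := twin (Some w) isT; rewrite (inj_eq (@Some_inj _)) wx => /(_ isT)[_ E].
exact: (esym E).
Qed.

Lemma add_bot_None_not_basic : ~~ basic le' None.
Proof.
apply/negP => /basicP[_ B2 _]; case/negP: nch; apply/chainP => u v.
by rewrite -(pcomp_f add_bot_Some); apply: B2.
Qed.


Lemma add_bot_basic_outside w a :
  w \notin codom Some -> basic le' w -> pincomp le' w (Some a).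
Proof. by rewrite notin_codom_Some => /eqP-> bN; case/negP: add_bot_None_not_basic. Qed.

Lemma lower_add_bot_Some a : lower le' (Some a) = lower le a.
Proof. exact: (lower_f (@Some_inj _) add_bot_Some basic_add_bot_Some add_bot_basic_outside). Qed.

Lemma assoc_set_add_bot_Some a : assoc_set le' (Some a) = Some @: assoc_set le a.
Proof.
exact: (assoc_set_f (@Some_inj _) add_bot_Some basic_add_bot_Some add_bot_basic_outside).
Qed.

Lemma assoc_set_add_bot_None : assoc_set le' None = Some @: [set c | basic le c].
Proof.
apply/setP => -[c|]; rewrite inE ?Some_in_imset ?None_in_imset.
  by rewrite inE basic_add_bot_Some /pcomp /= andbT.
by rewrite (negbTE add_bot_None_not_basic).
Qed.

Lemma add_bot_None_lower : lower le' None.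
Proof.
have [b bb] := has_basic; rewrite /lower add_bot_None_not_basic.
by apply/existsP; exists (Some b); rewrite basic_add_bot_Some bb.
Qed.

(* The new bottom lies below [Some a]; it is discarded either by an element
   incomparable to [a] or, if [a] is comparable to everything, because it is a
   lower element with the same associated basic elements. *)
Lemma None_notin_Pset_add_bot a : None \notin Pset le' (Some a).
Proof.
rewrite /Pset basic_add_bot_Some.
rewrite lower_add_bot_Some.
rewrite (upper_f (@Some_inj _) add_bot_Some basic_add_bot_Some add_bot_basic_outside).
case: ifP => _; first by rewrite inE.
case: ifP => _; first by rewrite inE /plt andbF.
case: ifP => _; last by rewrite inE.
rewrite !inE add_bot_None_lower assoc_set_add_bot_None assoc_set_add_bot_Some /=.
rewrite (inj_eq (imset_inj (@Some_inj _))) eq_sym assoc_set_all negb_and negbK.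
have [/comparable_allP ca|] := boolP (comparable_all le a).
  by apply/orP; left; apply/forallP => c; apply/implyP => _; apply: ca.
rewrite negb_forall => /existsP[c nac]; apply/orP; right; rewrite negbK.
by apply/existsP; exists (Some c); rewrite /plt /pincomp /= pcompC.
Qed.

Lemma card_Pset_add_bot_Some a : #|Pset le' (Some a)| = #|Pset le a|.
Proof.
rewrite card_option_set (negbTE (None_notin_Pset_add_bot a)).
by rewrite (preim_Pset_f (@Some_inj _) add_bot_Some add_bot_uniform basic_add_bot_Some
  add_bot_basic_outside).
Qed.

Lemma card_Pset_add_bot_None : #|Pset le' None| = #|T|.
Proof.
rewrite /Pset (negbTE add_bot_None_not_basic) add_bot_None_lower card_option_set.
rewrite !inE /plt eqxx add0n -cardsT; apply: eq_card => b; rewrite !inE /=.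
by apply/existsPn => -[c|]; rewrite /pincomp /pcomp /= ?orbT ?andbF.
Qed.

End NotChain.


Lemma Lpoly_add_bot (R : comNzRingType) (x y : R) :
  (0 < #|T|)%N -> Lpoly le' x y = Lpoly le x y + y ^+ #|T|.
Proof.
move=> T_gt0; have [ch|nch] := boolP (chain le).
  move: T_gt0; case En: #|T| => [//|n] _.
  rewrite (Lpoly_chain le_refl le_anti le_trans x y ch En).
  have En' : #|{: option T}| = n.+2 by rewrite card_option En.
  rewrite (Lpoly_chain (add_bot_refl le_refl) (add_bot_anti le_anti) (add_bot_trans le_trans)
    x y (add_bot_chain ch) En').
  by rewrite big_ord_recr addrA.
rewrite /Lpoly (sum_max_antichain_option add_bot_Some add_bot_None_comparable_all _ T_gt0).
rewrite bA_set1 sA_set1 (negbTE (add_bot_None_not_basic nch)) card_Pset_add_bot_None // mul1r addrC.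
congr (_ + _); apply: eq_bigr => A _.
rewrite (bA_Some _ (basic_add_bot_Some nch)) sA_Some; congr (_ * _ ^+ _).
by apply: eq_bigr => a _; rewrite card_Pset_add_bot_Some.
Qed.

End AddBot.

Definition sum_rel (T1 T2 : finType) (le1 : rel T1) (le2 : rel T2) : rel (T1 + T2) :=
  fun u v =>
    match u, v with
    | inl a, inl b => le1 a b
    | inr a, inr b => le2 a b
    | _, _ => false
    end.

Section DisjointUnion.
Variables (T1 T2 : finType) (le1 : rel T1) (le2 : rel T2).
Local Notation le := (sum_rel le1 le2).

Lemma sum_rel_refl : reflexive le1 -> reflexive le2 -> reflexive le.
Proof. by move=> r1 r2 [a|a] /=. Qed.

Lemma sum_rel_anti : antisymmetric le1 -> antisymmetric le2 -> antisymmetric le.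
Proof. by move=> an1 an2 [a|a] [b|b] //= => [/an1|/an2] ->. Qed.

Lemma sum_rel_trans : transitive le1 -> transitive le2 -> transitive le.
Proof. by move=> tr1 tr2 [b|b] [a|a] [c|c] //=; [apply: tr1 | apply: tr2]. Qed.

Lemma inl_incomparable w a : w \notin codom inl -> pincomp le w (inl a).
Proof. by case: w => [b|b] //; rewrite codom_f. Qed.

Lemma inr_incomparable w a : w \notin codom inr -> pincomp le w (inr a).
Proof. by case: w => [b|b] //; rewrite codom_f. Qed.

Lemma basic_inl a : basic le (inl a) = basic le1 a.
Proof. exact: (basic_summand (@inl_inj _ _) (fun _ _ => erefl) inl_incomparable). Qed.

Lemma basic_inr a : basic le (inr a) = basic le2 a.
Proof. exact: (basic_summand (@inr_inj _ _) (fun _ _ => erefl) inr_incomparable). Qed.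

Lemma lower_inl a : lower le (inl a) = lower le1 a.
Proof. exact: (lower_summand (@inl_inj _ _) (fun _ _ => erefl) inl_incomparable). Qed.

Lemma lower_inr a : lower le (inr a) = lower le2 a.
Proof. exact: (lower_summand (@inr_inj _ _) (fun _ _ => erefl) inr_incomparable). Qed.

Lemma comparable_all_inl a :
  comparable_all le (inl a) = comparable_all le1 a && (#|T2| == 0%N).
Proof.
apply/comparable_allP/andP => [ca|[/comparable_allP ca /eqP T20] [w|w]].
- split; first by apply/comparable_allP => w; apply: (ca (inl w)).
  by apply/eqP/eq_card0 => w; have := ca (inr w).
- exact: ca.
- by have := card0_eq T20 w.
Qed.

Lemma comparable_all_inr a :
  comparable_all le (inr a) = comparable_all le2 a && (#|T1| == 0%N).
Proof.
apply/comparable_allP/andP => [ca|[/comparable_allP ca /eqP T10] [w|w]].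
- split; first by apply/comparable_allP => w; apply: (ca (inr w)).
  by apply/eqP/eq_card0 => w; have := ca (inl w).
- by have := card0_eq T10 w.
- exact: ca.
Qed.

Lemma card_Pset_inl a : #|Pset le (inl a)| = #|Pset le1 a|.
Proof.
rewrite (Pset_summand (@inl_inj _ _) (fun _ _ => erefl) inl_incomparable).
exact: card_imset (@inl_inj _ _).
Qed.

Lemma card_Pset_inr a : #|Pset le (inr a)| = #|Pset le2 a|.
Proof.
rewrite (Pset_summand (@inr_inj _ _) (fun _ _ => erefl) inr_incomparable).
exact: card_imset (@inr_inj _ _).
Qed.

Definition sum_set (A1 : {set T1}) (A2 : {set T2}) : {set T1 + T2} :=
  [set u | match u with inl a => a \in A1 | inr b => b \in A2 end].

Lemma max_antichain_sum_set A1 A2 :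
  max_antichain le (sum_set A1 A2) = max_antichain le1 A1 && max_antichain le2 A2.
Proof.
apply/max_antichainP/andP => [[acA domA]|[/max_antichainP[ac1 dom1] /max_antichainP[ac2 dom2]]].
  split; apply/max_antichainP; split.
  - by move=> u v uA vA; apply: (acA (inl u) (inl v)); rewrite ?inE.
  - move=> z zA; move: (domA (inl z)); rewrite inE => /(_ zA)[[a|a]]; rewrite inE // => aA za.
    by exists a.
  - by move=> u v uA vA; apply: (acA (inr u) (inr v)); rewrite ?inE.
  - move=> z zA; move: (domA (inr z)); rewrite inE => /(_ zA)[[a|a]]; rewrite inE // => aA za.
    by exists a.
split.
  move=> [u|u] [v|v]; rewrite !inE => uA vA uv //.
  - by apply: ac1; rewrite // -(inj_eq (@inl_inj _ _)).
  - by apply: ac2; rewrite // -(inj_eq (@inr_inj _ _)).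
move=> [z|z]; rewrite inE => zA.
  by have [a aA za] := dom1 z zA; exists (inl a); rewrite ?inE.
by have [a aA za] := dom2 z zA; exists (inr a); rewrite ?inE.
Qed.

Lemma bA_sum_set A1 A2 : bA le (sum_set A1 A2) = (bA le1 A1 + bA le2 A2)%N.
Proof.
rewrite /bA card_sum_set; congr (_ + _)%N; apply: eq_card => a.
  by rewrite !inE basic_inl.
by rewrite !inE basic_inr.
Qed.

Lemma sA_sum_set A1 A2 : sA le (sum_set A1 A2) = (sA le1 A1 + sA le2 A2)%N.
Proof.
rewrite /sA big_mkcond big_sumType /=; congr (_ + _)%N; rewrite [RHS]big_mkcond;
  apply: eq_bigr => a _; rewrite inE.
  by rewrite card_Pset_inl.
by rewrite card_Pset_inr.
Qed.

Lemma Lpoly_sum_rel (R : comNzRingType) (x y : R) :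
  Lpoly le x y = Lpoly le1 x y * Lpoly le2 x y.
Proof.
rewrite /Lpoly big_distrlr /= pair_big /=.
rewrite (reindex_onto (fun A => sum_set A.1 A.2)
                      (fun A => ([set a | inl a \in A], [set b | inr b \in A]))).
  apply: eq_big => [[A1 A2]|[A1 A2] _] /=.
    rewrite max_antichain_sum_set.
    have -> : [set a | inl a \in sum_set A1 A2] = A1 by apply/setP => a; rewrite !inE.
    have -> : [set b | inr b \in sum_set A1 A2] = A2 by apply/setP => b; rewrite !inE.
    by rewrite eqxx andbT.
  by rewrite bA_sum_set sA_sum_set !exprD mulrACA.
by move=> A _; apply/setP => -[a|a]; rewrite !inE.
Qed.

End DisjointUnion.

Lemma vle_refl t : reflexive (@vle t).
Proof.
elim: t => [|a IHa b IHb|a IH|a IH]; first by case.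
- exact: sum_rel_refl.
- exact: add_top_refl.
- exact: add_bot_refl.
Qed.

Lemma vle_anti t : antisymmetric (@vle t).
Proof.
elim: t => [|a IHa b IHb|a IH|a IH]; first by case.
- exact: sum_rel_anti.
- exact: add_top_anti.
- exact: add_bot_anti.
Qed.

Lemma vle_trans t : transitive (@vle t).
Proof.
elim: t => [|a IHa b IHb|a IH|a IH]; first by case.
- exact: sum_rel_trans.
- exact: add_top_trans.
- exact: add_bot_trans.
Qed.

Lemma vposet_has_basic t : (0 < #|vcarrier t|)%N -> exists b, basic (@vle t) b.
Proof.
elim: t => [|a IHa b IHb|a IH|a IH] /=; first by rewrite card_void.
- rewrite card_sum; have [a0|/IHa[c bc] _] := posnP #|vcarrier a|.
    by rewrite a0 => /IHb[c bc]; exists (inr c); rewrite (basic_inr (@vle a)).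
  by exists (inl c); rewrite (basic_inl _ (@vle b)).
- move=> _; have [a0|/IH[c bc]] := posnP #|vcarrier a|.
    by exists None; apply: subsingleton_basic; rewrite card_option a0.
  by exists (Some c); rewrite (basic_add_top_Some (@vle a)).
- move=> _; have [a0|/IH[c bc]] := posnP #|vcarrier a|.
    by exists None; apply: subsingleton_basic; rewrite card_option a0.
  have [ch|nch] := boolP (chain (@vle a)).
    exists None.
    exact: (chain_minimum_basic (@vle_refl (VBot a)) (@vle_anti _) (@vle_trans _)
      (add_bot_chain ch)).
  by exists (Some c); rewrite (basic_add_bot_Some (@vle_refl a) nch).
Qed.

Lemma vposet_spine_complete t : spine_complete (@vle t).
Proof.
elim: t => [|a IHa b IHb|a IH|a IH] /=; first by case.
- move=> [l|l] ll /forallP lb.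
  + rewrite (@lower_inl _ _ _ (@vle b)) in ll; rewrite comparable_all_inl; apply/andP; split.
      apply: IHa ll _; apply/forallP => c; rewrite -(@basic_inl _ _ _ (@vle b)).
      exact: lb (inl c).
    rewrite eqn0Ngt; apply/negP => /vposet_has_basic[c bc].
    by move: (lb (inr c)); rewrite (@basic_inr _ _ (@vle a)) bc.
  + rewrite (@lower_inr _ _ (@vle a)) in ll; rewrite comparable_all_inr; apply/andP; split.
      apply: IHb ll _; apply/forallP => c; rewrite -(@basic_inr _ _ (@vle a)).
      exact: lb (inr c).
    rewrite eqn0Ngt; apply/negP => /vposet_has_basic[c bc].
    by move: (lb (inl c)); rewrite (@basic_inl _ _ _ (@vle b)) bc.
- move=> [l|] ll /forallP lb; last exact: add_top_None_comparable_all.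
  have a_gt0 : (0 < #|vcarrier a|)%N by apply/card_gt0P; exists l.
  rewrite (lower_add_top_Some (@vle_refl a) (@vle_anti a) (@vle_trans a) a_gt0) in ll.
  rewrite comparable_all_add_top_Some; apply: IH ll _; apply/forallP => c.
  by rewrite -(basic_add_top_Some (@vle a)); exact: lb (Some c).
- move=> [l|] ll /forallP lb; last exact: add_bot_None_comparable_all.
  have [ch|nch] := boolP (chain (@vle a)).
    exact: (chain_comparable_all (add_bot_chain ch)).
  rewrite (lower_add_bot_Some (@vle_refl a) nch) in ll.
  rewrite comparable_all_add_bot_Some; apply: IH ll _; apply/forallP => c.
  by rewrite -(basic_add_bot_Some (@vle_refl a) nch); exact: lb (Some c).
Qed.

Theorem theorem3p17 (R : comNzRingType) (x y : R) (t : vposet) :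
  Ppoly x y t = Lpoly (@vle t) x y.
Proof.
elim: t => [|a IHa b IHb|a IH|a IH]; rewrite [LHS]/=.
- by rewrite Lpoly_empty ?card_void.
- by rewrite IHa IHb Lpoly_sum_rel.
- have [a0|a_gt0] := posnP #|vcarrier a|.
    by rewrite (Lpoly_card1 (@vle_refl (VTop a)) (@vle_anti _) (@vle_trans _)) //= card_option a0.
  rewrite IH (Lpoly_add_top (@vle_refl a) (@vle_anti a) (@vle_trans a) a_gt0) //.
    exact: vposet_has_basic.
  exact: vposet_spine_complete.
- have [a0|a_gt0] := posnP #|vcarrier a|.
    by rewrite (Lpoly_card1 (@vle_refl (VBot a)) (@vle_anti _) (@vle_trans _)) //= card_option a0.
  rewrite IH (Lpoly_add_bot (@vle_refl a) (@vle_anti a) (@vle_trans a)) //.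
  exact: vposet_has_basic.
Qed.
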